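(* Let $\mathbf c,\mathbf c_0\in\mathbb{R}^n$ and let $\mathbf P,\mathbf P_0\in\mathbb{R}^{n\times n}$ be symmetric positive definite. Let $\mathbf P_0=\mathbf L_0\mathbf L_0^\top$ be the Cholesky factorization, $\tilde{\mathbf c}=\mathbf L_0^\top(\mathbf c-\mathbf c_0)$, $\tilde{\mathbf P}=\mathbf L_0^{-1}\mathbf P\mathbf L_0^{-\top}$, and $\ell^*=\sup_{\beta\in\mathcal{I}_{\tilde{\mathbf P}}}\ell_{\tilde{\mathbf c},\tilde{\mathbf P}}(\beta)$. Then $$\mathcal{E}(\mathbf c,\mathbf P)\Subset\mathcal{E}\big(\mathbf c_0,(-\ell^* )^{-1}\mathbf P_0\big)$$ and $$\mathcal{E}(\mathbf d,-\ell^*\mathbf P)\Subset\mathcal{E}(\mathbf c_0,\mathbf P_0),\qquad\text{where } \mathbf d=(-\ell^* )^{-1/2}(\mathbf c-\mathbf c_0)+\mathbf c_0.$$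
   Context: $\mathcal{E}(\mathbf c,\mathbf P)=\{\mathbf x:(\mathbf x-\mathbf c)^\top\mathbf P(\mathbf x-\mathbf c)\le1\}$; $\mathcal{E}\Subset\mathcal{E}_0$ means $\mathcal{E}\subseteq\mathcal{E}_0$ and $\partial\mathcal{E}\cap\partial\mathcal{E}_0\neq\emptyset$. For symmetric positive definite $\mathbf Q$ and vector $\mathbf a$: let $\mathbf Q=\mathbf V\mathbf D\mathbf V^\top$ be a spectral decomposition ($\mathbf V$ orthogonal, $\mathbf D$ diagonal with entries $\lambda_i$), $\bar{\mathbf a}=\mathbf V^\top\mathbf a$, $S(\bar{\mathbf a})=\{i:\bar a_i\neq0\}$, $\lambda_{\min}(\mathbf Q)$ the smallest eigenvalue; $\mathcal{I}_{\mathbf Q}=(\lambda_{\min}(\mathbf Q)^{-1},\infty)$ if some $i\in S(\bar{\mathbf a})$ has $\lambda_i=\lambda_{\min}(\mathbf Q)$, and $[\lambda_{\min}(\mathbf Q)^{-1},\infty)$ otherwise; and $\ell_{\mathbf a,\mathbf Q}(\beta)=-\beta-\sum_{i\in S(\bar{\mathbf a})}\bar a_i^2\frac{\lambda_i\beta}{\lambda_i\beta-1}$ for $\beta\in\mathcal{I}_{\mathbf Q}$. *)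

From HB Require Import structures.
From mathcomp Require Import all_boot all_order all_algebra.
From mathcomp Require Import all_classical all_reals all_analysis.
Set Implicit Arguments. Unset Strict Implicit. Unset Printing Implicit Defensive.
Import Order.TTheory GRing.Theory Num.Theory.
Import numFieldNormedType.Exports.
Local Open Scope classical_set_scope.
Local Open Scope ring_scope.

Section Defs.
Variable R : realType.

Definition qform n (c : 'cV[R]_n) (P : 'M[R]_n) (x : 'cV[R]_n) : R :=
  ((x - c)^T *m P *m (x - c)) ord0 ord0.

Definition ellipsoid n (c : 'cV[R]_n) (P : 'M[R]_n) : set 'cV[R]_n :=
  [set x | qform c P x <= 1].

Definition boundary n (A : set 'cV[R]_n) : set 'cV[R]_n :=
  closure A `\` interior A.

(* E ⋐ E0 : E ⊆ E0 and ∂E ∩ ∂E0 ≠ ∅ *)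
Definition touch_subset n (E E0 : set 'cV[R]_n) : Prop :=
  E `<=` E0 /\ boundary E `&` boundary E0 !=set0.

Definition symmetric_mx n (P : 'M[R]_n) : Prop := P^T = P.

Definition posdef_mx n (P : 'M[R]_n) : Prop :=
  symmetric_mx P /\ forall x : 'cV[R]_n, x != 0 -> 0 < (x^T *m P *m x) ord0 ord0.

Definition cholesky_factor n (P0 L0 : 'M[R]_n) : Prop :=
  is_trig_mx L0 /\ (forall i, 0 < L0 i i) /\ P0 = L0 *m L0^T.

Definition orthogonal_mx n (V : 'M[R]_n) : Prop := V^T *m V = 1%:M.

Definition spectral_decomp n (Q V : 'M[R]_n) (lam : 'I_n -> R) : Prop :=
  orthogonal_mx V /\ Q = V *m diag_mx (\row_i lam i) *m V^T.

Definition lam_min n (lam : 'I_n.+1 -> R) : R :=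
  \big[Num.min/lam ord0]_(i < n.+1) lam i.

Definition abar n (V : 'M[R]_n) (a : 'cV[R]_n) : 'I_n -> R :=
  fun i => (V^T *m a) i ord0.

Definition interval_I n (V : 'M[R]_n.+1) (lam : 'I_n.+1 -> R)
  (a : 'cV[R]_n.+1) : set R :=
  if `[< exists i, abar V a i != 0 /\ lam i = lam_min lam >]
  then [set b | (lam_min lam)^-1 < b]
  else [set b | (lam_min lam)^-1 <= b].

Definition ell n (V : 'M[R]_n) (lam : 'I_n -> R) (a : 'cV[R]_n) (b : R) : R :=
  - b - \sum_(i < n | abar V a i != 0)
          (abar V a i) ^+ 2 * (lam i * b / (lam i * b - 1)).

Definition ell_star n (V : 'M[R]_n.+1) (lam : 'I_n.+1 -> R)
  (a : 'cV[R]_n.+1) : R :=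
  sup [set ell V lam a b | b in interval_I V lam a].

End Defs.

From HB Require Import structures.
From mathcomp Require Import all_boot all_order all_algebra.
From mathcomp Require Import all_classical all_reals all_analysis.
From mathcomp Require Import ring lra.
Import Order.TTheory GRing.Theory Num.Theory.
Import numFieldNormedType.Exports.
Set Implicit Arguments. Unset Strict Implicit. Unset Printing Implicit Defensive.
Local Open Scope classical_set_scope.
Local Open Scope ring_scope.

(* In the coordinates [z = V^T L0^T (x - c0)] the ellipsoid E(c0, P0) is the
   unit ball and E(c, P) is [sum_i lam_i (z_i - ab_i)^2 <= 1], so everything
   reduces to maximising [|z|^2] on the latter, and [ell] is the Lagrangian
   dual of that problem.  For [u = lam_i b > 1] one has
   [z^2 <= u (z - a)^2 + a^2 u / (u - 1)] with equality at
   [z = a u / (u - 1)]; summing gives weak duality [|z|^2 <= - ell b], and a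
   multiplier [b] at which the equality point meets the constraint (found by
   the intermediate value theorem, or at [b = 1 / lam_min] with an extra
   component along a direction where [ab = 0]) makes it an equality.  So
   [- ell_star] is the maximum of [(x - c0)^T P0 (x - c0)] on E(c, P), attained
   on the boundary of both ellipsoids; the second claim is the first one
   dilated about [c0] by [sqrt (- ell_star)]. *)

Section ScalarDuality.
Variable R : realFieldType.
Implicit Types l b z a : R.

Lemma sqr_le_dual l b z a : 1 < l * b ->
  z ^+ 2 <= b * (l * (z - a) ^+ 2) + a ^+ 2 * (l * b / (l * b - 1)).
Proof.
move=> lb_gt1; set u := l * b.
have u1_neq0 : u - 1 != 0 by rewrite subr_eq0 gt_eqF.
have -> : b * (l * (z - a) ^+ 2) = u * (z - a) ^+ 2 by rewrite /u; ring.
have gapE : u * (z - a) ^+ 2 + a ^+ 2 * (u / (u - 1)) - z ^+ 2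
    = ((u - 1) * z - u * a) ^+ 2 / (u - 1) by field.
by rewrite -subr_ge0 gapE divr_ge0 ?sqr_ge0 // subr_ge0 ltW.
Qed.

Lemma dual_point_gap l b a : l * b != 1 ->
  l * (a * (l * b / (l * b - 1)) - a) ^+ 2 = l * a ^+ 2 / (l * b - 1) ^+ 2.
Proof. by rewrite -subr_eq0 => lb1; field. Qed.

Lemma dual_point_sqr l b a : l * b != 1 ->
  (a * (l * b / (l * b - 1))) ^+ 2
  = b * (l * (a * (l * b / (l * b - 1)) - a) ^+ 2) + a ^+ 2 * (l * b / (l * b - 1)).
Proof. by rewrite -subr_eq0 => lb1; field. Qed.

End ScalarDuality.

Section QuadraticForms.
Variables (R : realType) (n : nat).
Implicit Types (c d w x y z : 'cV[R]_n) (P T : 'M[R]_n).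

Lemma qformZ c P k x : qform c (k *: P) x = k * qform c P x.
Proof. by rewrite /qform -scalemxAr -scalemxAl mxE. Qed.

Lemma qform_dilate c d P k x y :
  y - c = k *: (x - d) -> qform c P y = k ^+ 2 * qform d P x.
Proof.
move=> yE; rewrite /qform yE linearZ /= [(k *: _)^T]linearZ /= -!scalemxAl !mxE.
ring.
Qed.

Lemma qform_affine c c0 w P T z :
  T *m w = c - c0 -> qform c P (c0 + T *m z) = qform w (T^T *m P *m T) z.
Proof.
move=> Tw; rewrite /qform.
have -> : c0 + T *m z - c = T *m (z - w).
  by rewrite mulmxBr Tw opprB addrA (addrC c0).
by rewrite trmx_mul !mulmxA.
Qed.

Lemma qform_diag c (d : 'I_n -> R) x :
  qform c (diag_mx (\row_i d i)) x = \sum_i d i * (x i ord0 - c i ord0) ^+ 2.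
Proof.
rewrite /qform mul_mx_diag !mxE; apply: eq_bigr => i _; rewrite !mxE; ring.
Qed.

Lemma qform_eq1_boundary c P x :
  qform c P x = 1 -> boundary (ellipsoid c P) x.
Proof.
move=> qx1; split; first by apply: subset_closure; rewrite /ellipsoid /= qx1.
move=> /nbhs_ballP [e /= e_gt0 ball_sub].
set t := e / (2 * (`|x - c| + 1)).
have t_gt0 : 0 < t by apply: divr_gt0 => //; rewrite mulr_gt0 // ltr_wpDl.
have : ellipsoid c P (x + t *: (x - c)).
  apply: ball_sub; rewrite -ball_normE /ball_ /= opprD addrA subrr add0r normrN.
  rewrite normrZ gtr0_norm // /t mulrAC ltr_pdivrMr; last first.
    by rewrite mulr_gt0 // ltr_wpDl.
  have : 0 <= `|x - c| by []; nra.
rewrite /ellipsoid /= (@qform_dilate c c P (1 + t) x); last first.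
  by rewrite scalerDl scale1r addrAC.
rewrite qx1 mulr1; nra.
Qed.

End QuadraticForms.

Section Spectrum.
Variables (R : realType) (n : nat).

Lemma lam_min_le (lam : 'I_n.+1 -> R) i : lam_min lam <= lam i.
Proof. by rewrite /lam_min (bigD1 i) //= ge_min lexx. Qed.

Lemma lam_min_attained (lam : 'I_n.+1 -> R) : exists k, lam k = lam_min lam.
Proof.
rewrite /lam_min; apply: (big_ind (fun v => exists k, lam k = v)).
- by exists ord0.
- move=> _ _ [k1 <-] [k2 <-].
  by case: (leP (lam k1) (lam k2)); [exists k1 | exists k2].
- by move=> k _; exists k.
Qed.

Lemma lam_min_gt0 (lam : 'I_n.+1 -> R) : (forall i, 0 < lam i) -> 0 < lam_min lam.
Proof. by move=> lam_gt0; have [k <-] := lam_min_attained lam. Qed.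

Lemma posdef_mx_congr (A P : 'M[R]_n) :
  A \in unitmx -> posdef_mx P -> posdef_mx (A *m P *m A^T).
Proof.
move=> A_unit [P_sym P_pos]; split.
  by rewrite /symmetric_mx !trmx_mul trmxK P_sym mulmxA.
move=> x x_neq0.
have -> : x^T *m (A *m P *m A^T) *m x = (A^T *m x)^T *m P *m (A^T *m x).
  by rewrite trmx_mul trmxK !mulmxA.
have AT_unit : A^T \in unitmx by rewrite unitmx_tr.
apply: P_pos; apply: contra x_neq0 => /eqP Ax0.
by rewrite -[x]mul1mx -(mulVmx AT_unit) -mulmxA Ax0 mulmx0.
Qed.

Lemma spectral_decomp_posdef_gt0 (Q V : 'M[R]_n) (lam : 'I_n -> R) i :
  posdef_mx Q -> spectral_decomp Q V lam -> 0 < lam i.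
Proof.
move=> [_ Q_pos] [VV QE]; set e : 'cV[R]_n := delta_mx i ord0.
have Ve_neq0 : V *m e != 0.
  apply/eqP => /(congr1 (mulmx V^T)); rewrite mulmxA VV mul1mx mulmx0.
  by move/matrixP/(_ i ord0); rewrite !mxE !eqxx /= => /eqP; rewrite oner_eq0.
have := Q_pos _ Ve_neq0.
have -> : ((V *m e)^T *m Q *m (V *m e)) ord0 ord0 = qform 0 (diag_mx (\row_j lam j)) e.
  have VQV : V^T *m Q *m V = diag_mx (\row_j lam j).
    by rewrite QE !mulmxA VV mul1mx -mulmxA VV mulmx1.
  by rewrite /qform subr0 -VQV trmx_mul !mulmxA.
rewrite qform_diag (bigD1 i) //= big1 => [|j ji]; rewrite !mxE ?eqxx ?(negbTE ji) /=.
  by rewrite subr0 expr1n mulr1 addr0.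
by rewrite subr0 expr0n /= mulr0.
Qed.

Lemma cholesky_factor_unitmx (P0 L0 : 'M[R]_n) :
  cholesky_factor P0 L0 -> L0 \in unitmx.
Proof.
case=> L0_trig [L0_pos _]; rewrite unitmxE det_trig // unitfE.
by apply: lt0r_neq0; apply: prodr_gt0 => i _.
Qed.

End Spectrum.

Lemma continuous_div_sqr_affine (R : realType) (q l x : R) : l * x != 1 ->
  {for x, continuous (fun b : R => q / (l * b - 1) ^+ 2)}.
Proof.
move=> lx1; apply: cvgMl_tmp; rewrite /GRing.exp /=.
apply: cvgV; first by rewrite mulf_neq0 // subr_eq0.
by apply: cvgM; apply: cvgB; [apply: cvgMl_tmp; exact: cvg_id | exact: cvg_cst
  | apply: cvgMl_tmp; exact: cvg_id | exact: cvg_cst].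
Qed.

Section LagrangeDuality.
Variables (R : realType) (n : nat) (V : 'M[R]_n.+1) (lam : 'I_n.+1 -> R).
Variable a : 'cV[R]_n.+1.
Hypothesis lam_gt0 : forall i, 0 < lam i.

Local Notation ab := (abar V a).
Local Notation I_Q := (interval_I V lam a).
Local Notation lmin := (lam_min lam).

Let lmin_gt0 : 0 < lmin. Proof. exact: lam_min_gt0. Qed.

Lemma interval_I_ge b : I_Q b -> lmin^-1 <= b.
Proof. by rewrite /interval_I; case: asboolP => _ //= /ltW. Qed.

Lemma interval_I_le b b' : I_Q b -> b <= b' -> I_Q b'.
Proof.
by rewrite /interval_I; case: asboolP => _ /=; [exact: lt_le_trans | exact: le_trans].
Qed.

Lemma interval_I_mul_ge1 i b : I_Q b -> 1 <= lam i * b.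
Proof.
move=> /interval_I_ge b_ge; have lmin_le := lam_min_le lam i.
have inv_lmin : lmin * lmin^-1 = 1 by rewrite mulfV ?gt_eqF.
have inv_gt0 : 0 < lmin^-1 by rewrite invr_gt0.
have := lmin_gt0; nra.
Qed.

Lemma interval_I_mul_gt1 i b : I_Q b -> ab i != 0 -> 1 < lam i * b.
Proof.
move=> Ib ai; have inv_lmin : lmin * lmin^-1 = 1 by rewrite mulfV ?gt_eqF.
have inv_gt0 : 0 < lmin^-1 by rewrite invr_gt0.
have lmin_le := lam_min_le lam i; have li := lam_gt0 i.
move: Ib; rewrite /interval_I; case: asboolP => [_ /= b_gt | no_min /= b_ge].
  nra.
have : lmin < lam i.
  rewrite lt_neqAle lmin_le andbT; apply/eqP => lmin_eq.
  by apply: no_min; exists i; rewrite lmin_eq.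
nra.
Qed.

Lemma interval_I_mul_neq1 i b : I_Q b -> ab i != 0 -> lam i * b != 1.
Proof. by move=> Ib ai; rewrite gt_eqF // interval_I_mul_gt1. Qed.

Lemma ell_le_inv_lam_min b : I_Q b -> ell V lam a b <= - lmin^-1.
Proof.
move=> Ib; have := interval_I_ge Ib.
have : 0 <= \sum_(i < n.+1 | ab i != 0) ab i ^+ 2 * (lam i * b / (lam i * b - 1)).
  apply: sumr_ge0 => i ai; rewrite mulr_ge0 ?sqr_ge0 // divr_ge0 //.
    by rewrite (le_trans ler01) ?interval_I_mul_ge1.
  by rewrite subr_ge0 interval_I_mul_ge1.
rewrite /ell; lra.
Qed.

Let ells := [set ell V lam a b | b in I_Q].

Let ells_neq0 : ells !=set0.
Proof.
exists (ell V lam a (lmin^-1 + 1)), (lmin^-1 + 1) => //.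
have : lmin^-1 < lmin^-1 + 1 by rewrite ltrDl.
by rewrite /interval_I; case: asboolP => _ /= //; apply: ltW.
Qed.

Let ells_ub : ubound ells (- lmin^-1).
Proof. by move=> _ [b Ib <-]; exact: ell_le_inv_lam_min. Qed.

Lemma ell_le_ell_star b : I_Q b -> ell V lam a b <= ell_star V lam a.
Proof. by move=> Ib; apply: ub_le_sup; [exists (- lmin^-1) | exists b]. Qed.

Lemma ell_star_lt0 : ell_star V lam a < 0.
Proof.
apply: (le_lt_trans (ge_sup ells_neq0 ells_ub)).
by rewrite oppr_lt0 invr_gt0.
Qed.

Lemma weak_duality b (z : 'I_n.+1 -> R) : I_Q b ->
  \sum_i lam i * (z i - ab i) ^+ 2 <= 1 -> \sum_i z i ^+ 2 <= - ell V lam a b.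
Proof.
move=> Ib constr; have b_ge0 : 0 <= b.
  by apply: le_trans (interval_I_ge Ib); rewrite invr_ge0 ltW.
rewrite /ell opprB opprK addrC big_mkcond /=.
apply: (@le_trans _ _ (\sum_i (b * (lam i * (z i - ab i) ^+ 2) +
   (if ab i != 0 then ab i ^+ 2 * (lam i * b / (lam i * b - 1)) else 0)))).
  apply: ler_sum => i _; case: ifPn => [ai | /negPn/eqP ->].
    exact/sqr_le_dual/interval_I_mul_gt1.
  rewrite subr0 addr0 mulrA (mulrC b).
  have := interval_I_mul_ge1 i Ib; have := sqr_ge0 (z i); nra.
rewrite big_split /= -mulr_sumr -big_mkcond lerD2r.
by rewrite ler_piMr.
Qed.

Lemma sum_sqr_le_ell_star (z : 'I_n.+1 -> R) :
  \sum_i lam i * (z i - ab i) ^+ 2 <= 1 -> \sum_i z i ^+ 2 <= - ell_star V lam a.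
Proof.
move=> constr; rewrite lerNr; apply: ge_sup => // _ [b Ib <-].
by rewrite lerNr; exact: weak_duality.
Qed.

(* The constraint value [sum_i lam i (z_i - ab_i)^2] at the maximiser
   [z_i = ab_i lam_i b / (lam_i b - 1)] of the Lagrangian with multiplier [b]. *)
Definition dual_constraint b :=
  \sum_(i < n.+1 | ab i != 0) lam i * ab i ^+ 2 / (lam i * b - 1) ^+ 2.

Lemma dual_constraint_continuous b : I_Q b -> {for b, continuous dual_constraint}.
Proof.
move=> Ib; apply: (@cvg_big R 'I_n.+1 +%R 0 _ add_continuous) => i ai.
exact/continuous_div_sqr_affine/interval_I_mul_neq1.
Qed.

Lemma dual_constraint_far_le1 b : I_Q b ->
  dual_constraint (b + ((\sum_i ab i ^+ 2 + 1) / lmin + 1)) <= 1.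
Proof.
move=> Ib; set A := \sum_i ab i ^+ 2; pose w := lmin^-1.
have A_ge0 : 0 <= A by apply: sumr_ge0 => i _; exact: sqr_ge0.
have inv_lmin : lmin * w = 1 by rewrite mulfV ?gt_eqF.
have w_gt0 : 0 < w by rewrite invr_gt0.
have termP i : ab i != 0 ->
    lam i * ab i ^+ 2 / (lam i * (b + ((A + 1) / lmin + 1)) - 1) ^+ 2
      <= ab i ^+ 2 / (A + 1).
  move=> ai; set D := lam i * (b + ((A + 1) / lmin + 1)) - 1.
  have lmin_le := lam_min_le lam i; have li := lam_gt0 i.
  have lib := interval_I_mul_ge1 i Ib.
  have lw : 1 <= lam i * w by rewrite -inv_lmin ler_wpM2r // ltW.
  have DE : D = (lam i * b - 1) + lam i * w * (A + 1) + lam i by rewrite /D /w; ring.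
  have DA : A + 1 <= D by rewrite DE; nra.
  have Dl : lam i <= D by rewrite DE; nra.
  rewrite ler_pdivrMr ?exprn_gt0 // ?(lt_le_trans _ Dl) // mulrAC.
  rewrite ler_pdivlMr; last by lra.
  have : lam i * (A + 1) <= D ^+ 2 by rewrite expr2; nra.
  have := sqr_ge0 (ab i); nra.
rewrite /dual_constraint; apply: (le_trans (ler_sum _ termP)).
apply: (@le_trans _ _ (\sum_i ab i ^+ 2 / (A + 1))).
  rewrite [leLHS]big_mkcond /=; apply: ler_sum => i _.
  by case: ifP => // _; rewrite divr_ge0 ?sqr_ge0 // addr_ge0.
by rewrite -mulr_suml -/A ler_pdivrMr ?mul1r ?ltr_pwDr //; lra.
Qed.

Lemma dual_constraint_eq1 b : I_Q b -> 1 <= dual_constraint b ->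
  exists2 b', I_Q b' & dual_constraint b' = 1.
Proof.
move=> Ib le1; set M := (\sum_i ab i ^+ 2 + 1) / lmin + 1.
have M_gt0 : 0 < M.
  have A_ge0 : 0 <= \sum_i ab i ^+ 2 by apply: sumr_ge0 => i _; exact: sqr_ge0.
  have : 0 <= (\sum_i ab i ^+ 2 + 1) / lmin by rewrite divr_ge0 ?addr_ge0 // ltW.
  rewrite /M; lra.
have far := dual_constraint_far_le1 Ib; rewrite -/M in far.
have b_le : b <= b + M by rewrite lerDl ltW.
have cont : {within `[b, b + M], continuous dual_constraint}.
  apply: continuous_in_subspaceT => x; rewrite inE /= in_itv /= => /andP [bx _].
  exact/dual_constraint_continuous/(interval_I_le Ib).
have range : Num.min (dual_constraint b) (dual_constraint (b + M)) <= 1 <=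
    Num.max (dual_constraint b) (dual_constraint (b + M)).
  by rewrite ge_min le_max le1 far orbT.
have [b' b'_in b'1] := IVT b_le cont range.
move: b'_in; rewrite in_itv /= => /andP [bb' _].
by exists b' => //; exact: interval_I_le Ib bb'.
Qed.

Lemma dual_constraint_ge1_at_min k : ab k != 0 -> lam k = lmin ->
  exists2 b, I_Q b & 1 <= dual_constraint b.
Proof.
move=> ak lk; set tau := Num.sqrt (lmin * ab k ^+ 2).
have ak2 : 0 < ab k ^+ 2 by rewrite lt0r sqr_ge0 andbT sqrf_eq0.
have q_gt0 : 0 < lmin * ab k ^+ 2 by rewrite mulr_gt0.
have tau_gt0 : 0 < tau by rewrite sqrtr_gt0.
have tau2 : tau ^+ 2 = lmin * ab k ^+ 2 by rewrite sqr_sqrtr // ltW.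
exists ((1 + tau) / lmin).
  rewrite /interval_I asboolT; last by exists k.
  by rewrite /= -{1}[lmin^-1]mul1r ltr_pM2r ?invr_gt0 // ltrDl.
rewrite /dual_constraint (bigD1 k) //= lk.
have -> : lmin * ((1 + tau) / lmin) - 1 = tau.
  by rewrite mulrCA mulfV ?gt_eqF // mulr1 addrC addKr.
rewrite tau2 divff ?gt_eqF // lerDl.
by apply: sumr_ge0 => i _; rewrite divr_ge0 ?sqr_ge0 // mulr_ge0 ?sqr_ge0 // ltW.
Qed.

Lemma dual_optimum_exists : exists b k t,
  [/\ I_Q b, t = 0 \/ (lam k * b = 1 /\ ab k = 0)
    & dual_constraint b + lam k * t ^+ 2 = 1].
Proof.
have from_ge1 : (exists2 b, I_Q b & 1 <= dual_constraint b) ->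
    exists b k t, [/\ I_Q b, t = 0 \/ (lam k * b = 1 /\ ab k = 0)
      & dual_constraint b + lam k * t ^+ 2 = 1].
  case=> b Ib le1; have [b' Ib' h1] := dual_constraint_eq1 Ib le1.
  by exists b', ord0, 0; rewrite expr0n /= mulr0 addr0; split => //; left.
case: (asboolP (exists k, ab k != 0 /\ lam k = lmin)) => [[k [ak lk]] | no_min].
  exact/from_ge1/(dual_constraint_ge1_at_min ak lk).
(* Otherwise [I_Q] is closed; if the constraint is still slack at [1 / lmin],
   the remaining mass is put on a coordinate [k] of [lmin], where [ab k = 0]. *)
have Imin : I_Q lmin^-1 by rewrite /interval_I asboolF //=.
have [ge1 | lt1] := lerP 1 (dual_constraint lmin^-1).
  by apply: from_ge1; exists lmin^-1.
have [k lk] := lam_min_attained lam.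
have ak : ab k = 0.
  by case: (eqVneq (ab k) 0) => // ak; exfalso; apply: no_min; exists k.
have lk_gt0 := lam_gt0 k.
exists lmin^-1, k, (Num.sqrt ((1 - dual_constraint lmin^-1) / lam k)); split => //.
  by right; rewrite lk mulfV ?gt_eqF.
rewrite sqr_sqrtr ?divr_ge0 ?subr_ge0 ?ltW // mulrC divfK ?gt_eqF //.
by rewrite addrC subrK.
Qed.

Lemma dual_optimum_value b k t : I_Q b ->
  t = 0 \/ (lam k * b = 1 /\ ab k = 0) ->
  dual_constraint b + lam k * t ^+ 2 = 1 ->
  let z i := ab i * (lam i * b / (lam i * b - 1)) + (if i == k then t else 0) in
  \sum_i lam i * (z i - ab i) ^+ 2 = 1 /\ \sum_i z i ^+ 2 = - ell V lam a b.
Proof.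
move=> Ib t_cases constr1 z.
pose hterm i := if ab i != 0 then lam i * ab i ^+ 2 / (lam i * b - 1) ^+ 2 else 0.
pose eterm i := if ab i != 0 then ab i ^+ 2 * (lam i * b / (lam i * b - 1)) else 0.
pose kterm i := if i == k then lam k * t ^+ 2 else 0.
have coordE i : lam i * (z i - ab i) ^+ 2 = hterm i + kterm i /\
    z i ^+ 2 = b * (lam i * (z i - ab i) ^+ 2) + eterm i.
  rewrite /z /hterm /eterm /kterm; have [ai0 | ai] := eqVneq (ab i) 0.
    rewrite ai0 /= !(mul0r, add0r, subr0, addr0); case: eqP => [-> | _].
      case: t_cases => [-> | [lkb _]]; first by rewrite expr0n /= !mulr0.
      by rewrite mulrA (mulrC b) lkb mul1r.
    by rewrite expr0n /= !mulr0.
  have t0 : i == k -> t = 0.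
    by move=> /eqP ik; case: t_cases => [// | [_ ak]]; rewrite ik ak eqxx in ai.
  have lb1 := interval_I_mul_neq1 Ib ai.
  rewrite /=; case: eqP => [/eqP/t0 -> | _]; rewrite !addr0 ?expr0n /= ?mulr0 ?addr0;
    by split; [exact: dual_point_gap | exact: dual_point_sqr].
have constrE : \sum_i lam i * (z i - ab i) ^+ 2 = 1.
  rewrite (eq_bigr _ (fun i _ => (coordE i).1)) big_split /= -!big_mkcond /=.
  by rewrite big_pred1_eq.
split => //.
rewrite (eq_bigr _ (fun i _ => (coordE i).2)) big_split /= -mulr_sumr constrE mulr1.
by rewrite -big_mkcond /ell opprB opprK addrC.
Qed.

Lemma ell_star_attained : exists z : 'I_n.+1 -> R,
  \sum_i lam i * (z i - ab i) ^+ 2 = 1 /\ \sum_i z i ^+ 2 = - ell_star V lam a.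
Proof.
have [b [k [t [Ib t_cases constr1]]]] := dual_optimum_exists.
have [constrE valueE] := dual_optimum_value Ib t_cases constr1.
eexists; split; first exact: constrE.
apply/eqP; rewrite eq_le sum_sqr_le_ell_star ?constrE //= valueE lerN2.
exact: ell_le_ell_star.
Qed.

End LagrangeDuality.

Section Coordinates.
Variables (R : realType) (n : nat) (c c0 : 'cV[R]_n.+1) (P L0 V : 'M[R]_n.+1).
Variable lam : 'I_n.+1 -> R.
Hypotheses (L0_unit : L0 \in unitmx) (V_orth : orthogonal_mx V).
Hypothesis P_spectral :
  invmx L0 *m P *m (invmx L0)^T = V *m diag_mx (\row_i lam i) *m V^T.
Hypothesis lam_gt0 : forall i, 0 < lam i.

Local Notation ct := (L0^T *m (c - c0)).
Let T := (invmx L0)^T *m V.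
Let Tinv := V^T *m L0^T.

Let T_Tinv : T *m Tinv = 1%:M.
Proof.
apply: mulmx1C; rewrite /T /Tinv -mulmxA (mulmxA L0^T) trmx_inv.
by rewrite mulmxV ?unitmx_tr // mul1mx.
Qed.

Let T_P : T^T *m P *m T = diag_mx (\row_i lam i).
Proof.
rewrite /T trmx_mul trmxK -!mulmxA (mulmxA (invmx L0)) (mulmxA (invmx L0 *m P)).
by rewrite P_spectral !mulmxA V_orth mul1mx -mulmxA V_orth mulmx1.
Qed.

Let T_P0 : T^T *m (L0 *m L0^T) *m T = 1%:M.
Proof.
rewrite /T trmx_mul trmxK trmx_inv -!mulmxA (mulmxA (invmx L0)) mulVmx // mul1mx.
by rewrite (mulmxA L0^T) mulmxV ?unitmx_tr // mul1mx.
Qed.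

Lemma qform_P_coord z :
  qform c P (c0 + T *m z) = \sum_i lam i * (z i ord0 - abar V ct i) ^+ 2.
Proof.
have T_shift : T *m (V^T *m ct) = c - c0.
  by rewrite (mulmxA V^T) -/Tinv mulmxA T_Tinv mul1mx.
by rewrite (qform_affine _ _ T_shift) T_P qform_diag.
Qed.

Lemma qform_P0_coord z :
  qform c0 (L0 *m L0^T) (c0 + T *m z) = \sum_i z i ord0 ^+ 2.
Proof.
have T_shift : T *m 0 = c0 - c0 by rewrite mulmx0 subrr.
rewrite (qform_affine _ _ T_shift) T_P0.
have -> : 1%:M = diag_mx (\row_i 1 : 'rV[R]_n.+1) by apply/matrixP => i j; rewrite !mxE.
by rewrite qform_diag; apply: eq_bigr => i _; rewrite mxE subr0 mul1r.
Qed.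

Lemma qform_le_ell_star x :
  qform c P x <= 1 -> qform c0 (L0 *m L0^T) x <= - ell_star V lam ct.
Proof.
have -> : x = c0 + T *m (Tinv *m (x - c0)) by rewrite mulmxA T_Tinv mul1mx addrC subrK.
rewrite qform_P_coord qform_P0_coord.
exact: sum_sqr_le_ell_star.
Qed.

Lemma qform_ell_star_attained : exists x,
  qform c P x = 1 /\ qform c0 (L0 *m L0^T) x = - ell_star V lam ct.
Proof.
have [z [constrE valueE]] := ell_star_attained V ct lam_gt0.
exists (c0 + T *m \col_i z i).
rewrite qform_P_coord qform_P0_coord.
by split; [rewrite -constrE | rewrite -valueE]; apply: eq_bigr => i _; rewrite mxE.
Qed.

End Coordinates.

Section TouchingEllipsoids.
Variables (R : realType) (n : nat) (c c0 : 'cV[R]_n) (P P0 : 'M[R]_n) (s : R).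
Hypothesis s_gt0 : 0 < s.
Hypothesis qform_le : forall x, qform c P x <= 1 -> qform c0 P0 x <= s.
Hypothesis qform_attained : exists x, qform c P x = 1 /\ qform c0 P0 x = s.

Lemma touch_subset_max : touch_subset (ellipsoid c P) (ellipsoid c0 (s^-1 *: P0)).
Proof.
split=> [x /qform_le le_s | ].
  by rewrite /ellipsoid /= qformZ ler_pdivrMl // mulr1.
have [x [eq1 eq_s]] := qform_attained.
exists x; split; apply: qform_eq1_boundary => //.
by rewrite qformZ eq_s mulVf ?gt_eqF.
Qed.

Lemma touch_subset_max_dilate :
  touch_subset (ellipsoid ((Num.sqrt s)^-1 *: (c - c0) + c0) (s *: P))
    (ellipsoid c0 P0).
Proof.
set r := Num.sqrt s; set d := r^-1 *: (c - c0) + c0.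
have r_gt0 : 0 < r by rewrite sqrtr_gt0.
have r2 : r ^+ 2 = s by rewrite sqr_sqrtr // ltW.
have dilateP x : qform d (s *: P) x = qform c P (c0 + r *: (x - c0)).
  rewrite qformZ (@qform_dilate _ _ c d P r x) ?r2 //.
  by apply/matrixP => i j; rewrite /d !mxE; field; rewrite gt_eqF.
have dilateP0 x : qform c0 P0 x = qform c0 (s^-1 *: P0) (c0 + r *: (x - c0)).
  rewrite qformZ (@qform_dilate _ _ c0 c0 P0 r x (c0 + r *: (x - c0))) ?r2; last first.
    by rewrite addrAC subrr add0r.
  by rewrite mulrA mulVf ?mul1r // gt_eqF.
have [sub _] := touch_subset_max.
split=> [x | ]; first by rewrite /ellipsoid /= dilateP0 dilateP; exact: sub.
have [y [y_eq1 y_eq_s]] := qform_attained.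
set x := c0 + r^-1 *: (y - c0).
have xE : c0 + r *: (x - c0) = y.
  by rewrite /x addrAC subrr add0r scalerA mulfV ?gt_eqF // scale1r addrC subrK.
exists x; split; apply: qform_eq1_boundary.
  by rewrite dilateP xE.
by rewrite dilateP0 xE qformZ y_eq_s mulVf ?gt_eqF.
Qed.

End TouchingEllipsoids.

Theorem corollary2 (R : realType) (n : nat)
  (c c0 : 'cV[R]_n.+1) (P P0 L0 V : 'M[R]_n.+1) (lam : 'I_n.+1 -> R) :
  posdef_mx P -> posdef_mx P0 ->
  cholesky_factor P0 L0 ->
  let ct := L0^T *m (c - c0) in
  let Pt := invmx L0 *m P *m (invmx L0)^T in
  spectral_decomp Pt V lam ->
  let ls := ell_star V lam ct in
  let d := (Num.sqrt (- ls))^-1 *: (c - c0) + c0 in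
  touch_subset (ellipsoid c P) (ellipsoid c0 ((- ls)^-1 *: P0)) /\
  touch_subset (ellipsoid d ((- ls) *: P)) (ellipsoid c0 P0).
Proof.
move=> P_posdef _ chol ct Pt [V_orth Pt_spectral] ls d.
have L0_unit := cholesky_factor_unitmx chol.
have Pt_posdef : posdef_mx Pt by apply: posdef_mx_congr; rewrite ?unitmx_inv.
have lam_gt0 i : 0 < lam i.
  exact: spectral_decomp_posdef_gt0 Pt_posdef (conj V_orth Pt_spectral).
have ls_gt0 : 0 < - ls by rewrite oppr_gt0 ell_star_lt0.
have qform_le x : qform c P x <= 1 -> qform c0 (L0 *m L0^T) x <= - ls.
  exact: qform_le_ell_star.
have attained : exists x, qform c P x = 1 /\ qform c0 (L0 *m L0^T) x = - ls.
  exact: qform_ell_star_attained.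
case: chol => _ [_ ->].
by split; [apply: touch_subset_max | apply: touch_subset_max_dilate].
Qed.
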